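(* Let $G=(V,E)$ be a finite simple graph and $v\in V$. Let $G-v$ denote the graph obtained from $G$ by deleting $v$ and all edges incident to $v$. Then $$\gamma_{coe}(G)-\deg(v)-1\leq \gamma_{coe}(G-v)\leq \gamma_{coe}(G)+\deg(v)-1.$$
   Context: All graphs are finite and simple. For a graph $G=(V,E)$ and $v\in V$, $N_G(v)=\{u\in V: uv\in E\}$ and $\deg(v)=|N_G(v)|$. A set $D\subseteq V$ is a dominating set if every vertex of $V\setminus D$ is adjacent to at least one vertex of $D$. A dominating set $D$ is a co-even dominating set if $\deg(v)$ is even for every $v\in V\setminus D$ (degrees taken in the graph under consideration). The co-even domination number $\gamma_{coe}(G)$ is the minimum cardinality of a co-even dominating set of $G$. *)

From mathcomp Require Import all_boot all_order all_algebra.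
Set Implicit Arguments. Unset Strict Implicit. Unset Printing Implicit Defensive.

(* A finite simple graph: vertex type T : finType, symmetric irreflexive edge
   relation e. We work with induced subgraphs G[S] on a vertex set S, so that
   G = G[setT] and G - v = G[setT :\ v]. *)

Definition simple_graph (T : finType) (e : rel T) : Prop :=
  symmetric e /\ irreflexive e.

Definition nbhd (T : finType) (e : rel T) (S : {set T}) (x : T) : {set T} :=
  [set y in S | e x y].
Definition deg (T : finType) (e : rel T) (S : {set T}) (x : T) : nat :=
  #|nbhd e S x|.

Definition co_even_dominating (T : finType) (e : rel T) (S D : {set T}) : bool :=
  (D \subset S) &&
  [forall x in S :\: D, [exists y in D, e x y] && ~~ odd (deg e S x)].

(* minimum cardinality of a co-even dominating set of G[S]
   (S itself is always one, so #|S| is a valid initial bound) *)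
Definition gamma_coe (T : finType) (e : rel T) (S : {set T}) : nat :=
  \big[minn/#|S|]_(D : {set T} | co_even_dominating e S D) #|D|.

(* Deleting v changes only the degrees of its neighbours N(v).  Hence a
   co-even dominating set of G - v becomes one of G after adding v and N(v),
   and for a co-even dominating set D of G, (D ∪ N(v)) \ v is one of G - v.
   The latter costs at most |N(v)| - 1 extra vertices: either v ∈ D is
   removed, or v is dominated by a vertex of D ∩ N(v), counted twice in
   |D| + |N(v)|. *)

From mathcomp Require Import all_boot all_order all_algebra.
From mathcomp Require Import zify.
Import Order.TTheory.

Set Implicit Arguments.
Unset Strict Implicit.
Unset Printing Implicit Defensive.

Section CoEvenDomination.

Variables (T : finType) (e : rel T).

Lemma co_even_dominatingP (S D : {set T}) :
  reflect (D \subset S /\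
           forall x, x \in S -> x \notin D ->
             (exists2 y, y \in D & e x y) /\ ~~ odd (deg e S x))
          (co_even_dominating e S D).
Proof.
apply: (iffP andP) => -[sDS domD]; split=> //.
- move=> x xS xD; have := forallP domD x.
  rewrite !inE xS xD => /andP[/existsP[y /andP[yD exy]] ev].
  by split=> //; exists y.
- apply/forallP => x; apply/implyP; rewrite inE => /andP[xD xS].
  have [[y yD exy] ->] := domD x xS xD; rewrite andbT.
  by apply/existsP; exists y; rewrite yD.
Qed.

Lemma co_even_dominating_self (S : {set T}) : co_even_dominating e S S.
Proof. by apply/co_even_dominatingP; split=> // x ->. Qed.

(* [minn] on [nat] is convertible to [Order.min], so the order library's
   [bigmin] lemmas apply to [gamma_coe]. *)
Lemma gamma_coe_le [S D : {set T}] :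
  co_even_dominating e S D -> gamma_coe e S <= #|D|.
Proof. exact: (bigmin_le_cond #|S| (fun D : {set T} => #|D|)). Qed.

Lemma gamma_coe_attained (S : {set T}) :
  exists2 D, co_even_dominating e S D & gamma_coe e S = #|D|.
Proof.
have card_le D : co_even_dominating e S D -> (#|D| <= #|S|)%O.
  by case/andP => sDS _; rewrite leEnat subset_leq_card.
have [D domD minE] :=
  eq_bigmin S _ (fun D => #|D|) (co_even_dominating_self S) card_le.
by exists D; [exact: domD | exact: minE].
Qed.

Lemma nbhd_subset (S : {set T}) (x : T) : nbhd e S x \subset S.
Proof. by apply/subsetP => y; rewrite inE => /andP[]. Qed.

Hypothesis e_sym : symmetric e.

Lemma deg_setD1_nonadj (S : {set T}) (v x : T) :
  ~~ e v x -> deg e (S :\ v) x = deg e S x.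
Proof.
move=> nvx; apply: eq_card => y; rewrite !inE.
by case: eqVneq => //= ->; rewrite e_sym (negbTE nvx) andbF.
Qed.

Variables (S : {set T}) (v : T).
Hypothesis vS : v \in S.

Lemma co_even_dominating_setU1 [D : {set T}] :
  co_even_dominating e (S :\ v) D ->
  co_even_dominating e S (v |: (D :|: nbhd e S v)).
Proof.
case/co_even_dominatingP => sDS domD; apply/co_even_dominatingP; split.
  by rewrite !subUset sub1set vS (subset_trans sDS) ?subD1set // nbhd_subset.
move=> x xS; rewrite !inE xS /= !negb_or => /and3P[xv xD nvx].
have xSv : x \in S :\ v by rewrite !inE xv.
have [[y yD exy] ev] := domD x xSv xD.
split; first by exists y; rewrite // !inE yD orbT.
by rewrite -(deg_setD1_nonadj _ nvx).
Qed.

Lemma co_even_dominating_setD1 [D : {set T}] :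
  co_even_dominating e S D ->
  co_even_dominating e (S :\ v) ((D :|: nbhd e S v) :\ v).
Proof.
case/co_even_dominatingP => sDS domD; apply/co_even_dominatingP; split.
  by apply: setSD; rewrite subUset sDS nbhd_subset.
move=> x; rewrite !inE => /andP[xv xS]; rewrite xv xS !negb_or /=.
move=> /andP[xD nvx].
have [[y yD exy] ev] := domD x xS xD.
split; last by rewrite deg_setD1_nonadj.
exists y => //; rewrite !inE yD andbT.
by apply: contraNneq nvx => yv; rewrite e_sym -yv.
Qed.

Lemma gamma_coe_le_setD1 :
  gamma_coe e S <= gamma_coe e (S :\ v) + deg e S v + 1.
Proof.
have [D domD ->] := gamma_coe_attained (S :\ v).
apply: (leq_trans (gamma_coe_le (co_even_dominating_setU1 domD))).
by rewrite cardsU1 addnC leq_add ?leq_b1 ?leq_card_setU.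
Qed.

Lemma gamma_coe_setD1_lt :
  gamma_coe e (S :\ v) < gamma_coe e S + deg e S v.
Proof.
have [D domD ->] := gamma_coe_attained S.
apply: (leq_ltn_trans (gamma_coe_le (co_even_dominating_setD1 domD))).
rewrite /deg; set N := nbhd e S v.
have := cardsUI D N.
have [vD | vD] := boolP (v \in D).
  by have := cardsD1 v (D :|: N); rewrite !inE vD /=; lia.
case/co_even_dominatingP: (domD) => sDS /(_ v vS vD) [[y yD evy] _].
have DN_gt0 : 0 < #|D :&: N|.
  by apply/card_gt0P; exists y; rewrite !inE yD evy (subsetP sDS).
have := subset_leq_card (subD1set (D :|: N) v).
lia.
Qed.

End CoEvenDomination.

Local Open Scope ring_scope.

Theorem mainTheorem2 (T : finType) (e : rel T) (v : T) :
  simple_graph e ->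
  ((gamma_coe e [set: T])%:Z - (deg e [set: T] v)%:Z - 1
     <= (gamma_coe e ([set: T] :\ v))%:Z) /\
  ((gamma_coe e ([set: T] :\ v))%:Z
     <= (gamma_coe e [set: T])%:Z + (deg e [set: T] v)%:Z - 1).
Proof.
move=> [e_sym _].
have vT : v \in [set: T] by rewrite inE.
have := gamma_coe_le_setD1 e_sym vT; have := gamma_coe_setD1_lt e_sym vT.
lia.
Qed.
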